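(* For every $x\in X(l_1,\dots,l_n,l_\infty)$ and every $g\in J_n$, the border thickness of $gx$ equals the border thickness of $x$.
   Context: Cactus group: $J_n$ is the group generated by $s_{p,q}$, $1\le p<q\le n$, subject to the relations $s_{p,q}^2=e$; $s_{p,q}s_{p',q'}=s_{p',q'}s_{p,q}$ if $[p,q]$ and $[p',q']$ are disjoint; $s_{p,q}s_{p',q'}s_{p,q}=s_{p+q-q',p+q-p'}$ if $p\le p'<q'\le q$. Arc diagrams: fix nonnegative integers $l_1,\dots,l_n,l_\infty$. On the boundary circle of a closed disc place $n+1$ marked positions: position $0$ (occupied by $z_\infty$) and positions $1,\dots,n$ following it clockwise. An arc diagram is a bijective assignment of labels $z_1,\dots,z_n$ to positions $1,\dots,n$ together with a finite collection of simple arcs in the disc, pairwise disjoint except at endpoints, each joining two distinct marked points, such that $z_j$ is an endpoint of exactly $l_j$ arcs ($j\in\{1,\dots,n,\infty\}$; $l_j$ is the valence). Parallel arcs are allowed; diagrams are up to isotopy, equivalently determined by the labelling and the number of arcs between each pair of marked points. $X(l_1,\dots,l_n,l_\infty)$ is the set of such diagrams. Action: $s_{p,q}$ ($1\le p<q\le n$) acts by cutting off positions $p,\dots,q$ with a chord $\ell$ (arcs isotoped to cross $\ell$ at most once), reflecting that region by the reflection reversing $\ell$ (label at position $p+t$ goes to position $q-t$, crossing points on $\ell$ reversed), leaving the rest unchanged and reconnecting arcs at $\ell$. Words act right to left; this is an action of $J_n$. Border thickness: the minimum, over the $n+1$ cyclically adjacent pairs of positions $(0,1),(1,2),\dots,(n-1,n),(n,0)$,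 of the number of arcs joining the two points of the pair. *)

From mathcomp Require Import all_boot.
Set Implicit Arguments. Unset Strict Implicit. Unset Printing Implicit Defensive.

(* Marked positions on the boundary circle: 'I_n.+1, position 0 carries
   z_oo, positions 1..n follow clockwise.  Labels are also encoded in
   'I_n.+1: label 0 = z_oo, label j (1 <= j <= n) = z_j. *)

Record diagram (n : nat) := Diagram {
  lab  : 'I_n.+1 -> 'I_n.+1;            (* position -> label *)
  arcs : 'I_n.+1 -> 'I_n.+1 -> nat       (* number of arcs between two positions *)
}.

(* valence attached to a label: label 0 is z_oo (valence linf),
   label j+1 is z_{j+1} (valence l j, with l : 'I_n -> nat indexing l_1..l_n). *)
Definition valence n (l : 'I_n -> nat) (linf : nat) (j : 'I_n.+1) : nat :=
  match unlift ord0 j with Some j' => l j' | None => linf end.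

Definition is_arc_diagram n (l : 'I_n -> nat) (linf : nat) (d : diagram n) : Prop :=
  [/\ (injective (lab d) /\ lab d ord0 = ord0),
      (forall a b : 'I_n.+1, arcs d a b = arcs d b a),
      (forall a : 'I_n.+1, arcs d a a = 0),
      (* arcs pairwise disjoint except at endpoints: no interleaving endpoints *)
      (forall a c b e : 'I_n.+1, a < c -> c < b -> b < e ->
          arcs d a b = 0 \/ arcs d c e = 0)
    & (forall k : 'I_n.+1, \sum_(b < n.+1) arcs d k b = valence l linf (lab d k))].

Section Action.
Variables (n p q : nat).

Definition inside (k : 'I_n.+1) : bool := (p <= k) && (k <= q).

Definition refl (k : 'I_n.+1) : 'I_n.+1 := if inside k then inord (p + q - k) else k.

Definition ins : seq 'I_n.+1 := [seq inord k | k <- iota p (q - p).+1].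
(* outside positions in the order met along the boundary from the endpoint of
   the chord l between p-1 and p, i.e. p-1, p-2, ..., 0, n, n-1, ..., q+1 *)
Definition outs : seq 'I_n.+1 :=
  [seq inord k | k <- rev (iota 0 p) ++ rev (iota q.+1 (n - q))].

(* arcs crossing the chord l, listed (with multiplicity) in the order of their
   crossing points along l (from the p-1|p end to the q|q+1 end); each is
   recorded as (inside endpoint, outside endpoint). *)
Definition cross (d : diagram n) : seq ('I_n.+1 * 'I_n.+1) :=
  flatten [seq nseq (arcs d io.1 io.2) io | io <- [seq (i, o) | i <- ins, o <- outs]].

(* after reflecting, the inside half-arc reaching crossing point m+1-j (moved to
   crossing point j, and with reflected inside endpoint) is reconnected with the
   outside half-arc at crossing point j *)
Definition newcross (d : diagram n) : seq ('I_n.+1 * 'I_n.+1) :=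
  zip (map refl (rev (unzip1 (cross d)))) (unzip2 (cross d)).

Definition act_s (d : diagram n) : diagram n :=
  Diagram (fun k => lab d (refl k))
    (fun a b =>
       if inside a && inside b then arcs d (refl a) (refl b)
       else if ~~ inside a && ~~ inside b then arcs d a b
       else if inside a then count_mem (a, b) (newcross d)
       else count_mem (b, a) (newcross d)).
End Action.

(* a word s_{p1,q1} s_{p2,q2} ... s_{pk,qk} in the generators of J_n,
   given as a list of pairs; acting right to left *)
Definition gen_ok n (pq : nat * nat) : bool := (0 < pq.1 < pq.2) && (pq.2 <= n).

Definition act_word n (w : seq (nat * nat)) (d : diagram n) : diagram n :=
  foldr (fun pq d' => act_s pq.1 pq.2 d') d w.

Definition border_thickness n (d : diagram n) : nat :=
  foldr minn (arcs d ord_max ord0)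
    [seq arcs d (inord k) (inord (k.+1 %% n.+1)) | k <- iota 0 n.+1].

From mathcomp Require Import all_boot zify.
Set Implicit Arguments. Unset Strict Implicit. Unset Printing Implicit Defensive.

(* Let the generator cut along the chord l. Since arcs do not cross, the arcs
   crossing l, listed in the order of their crossing points, are sorted both by
   their inside endpoint and by the position of their outside endpoint. So those
   ending at p-1, those starting at p, those starting at q and those ending at
   q+1 form blocks at the two ends of the list, and the number of arcs joining
   either border pair cut by l, before or after reflecting, is the minimum of
   two of the four block lengths; the two pairs together have the same minimum
   before and after. Every other border pair is left alone or is sent to
   another one by the reflection, and the action keeps arcs non-crossing, so
   the border thickness is invariant along any word. *)

(** * Sorted sequences *)

Lemma leq_foldr_minn (m x0 : nat) (s : seq nat) :
  (m <= foldr minn x0 s) = (m <= x0) && all (leq m) s.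
Proof. by elim: s => [|x s IHs] /=; rewrite ?andbT // leq_min IHs andbCA. Qed.

Lemma pairwise_rev (T : Type) (r : rel T) (s : seq T) :
  pairwise r (rev s) = pairwise (fun x y => r y x) s.
Proof.
by elim: s => [|x s IHs] //=; rewrite rev_cons pairwise_rcons IHs all_rev.
Qed.

Lemma pairwise_iota (r : rel nat) m k :
  {in iota m k &, forall a b, a < b -> r a b} -> pairwise r (iota m k).
Proof.
move=> r_lt; apply: (sub_in_pairwise r_lt (allss _)).
by rewrite -sorted_pairwise ?iota_ltn_sorted //; apply: ltn_trans.
Qed.

Lemma pairwise_comparable (T : eqType) (r : rel T) (s : seq T) x y :
  reflexive r -> pairwise r s -> x \in s -> y \in s -> r x y || r y x.
Proof.
move=> r_refl; elim: s => [|z s IHs] //= /andP[/allP rz rs].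
rewrite !inE => /predU1P[->|xs] /predU1P[->|ys]; rewrite ?r_refl ?rz ?orbT //.
exact: IHs.
Qed.

Lemma pairwise_zip (S T : Type) (r1 : rel S) (r2 : rel T) s t :
  pairwise r1 s -> pairwise r2 t ->
  pairwise (fun u v => r1 u.1 v.1 && r2 u.2 v.2) (zip s t).
Proof.
elim: s t => [|x s IHs] [|y t] //= /andP[rx rs] /andP[ry rt].
rewrite IHs // andbT; elim: s t rx ry {rs rt IHs} => [|x' s IHs] [|y' t] //=.
by move=> /andP[-> ?] /andP[-> ?]; exact: IHs.
Qed.

Lemma pairwise_allpairs_lex (S T : eqType) (r1 : rel S) (r2 : rel T) s t :
  pairwise r1 s -> pairwise r2 t ->
  pairwise (fun e e' => r1 e.1 e'.1 || (e.1 == e'.1) && r2 e.2 e'.2)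
    [seq (x, y) | x <- s, y <- t].
Proof.
move=> + rt; elim: s => [|x s IHs] //= /andP[/allP rx rs].
rewrite pairwise_cat IHs // andbT pairwise_map; apply/andP; split.
  apply/allrelP => _ _ /mapP[y _ ->] /allpairsP[[x' y'] [/= /rx x's _ ->]] /=.
  by rewrite x's.
by apply: sub_pairwise rt => y y' /= ->; rewrite eqxx orbT.
Qed.

Lemma count_flatten_nseq (T : eqType) (f : T -> nat) (s : seq T) z :
  count_mem z (flatten [seq nseq (f w) w | w <- s]) = f z * count_mem z s.
Proof.
elim: s => [|w s IHs] /=; first by rewrite muln0.
rewrite count_cat count_nseq IHs /= mulnDr.
by case: eqP => [->|_]; rewrite /= ?mul1n ?muln1 ?mul0n ?muln0.
Qed.

Lemma mem_flatten_nseq (T : eqType) (f : T -> nat) (s : seq T) z :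
  z \in flatten [seq nseq (f w) w | w <- s] -> (z \in s) && (0 < f z).
Proof.
elim: s => [|w s IHs] //=; rewrite mem_cat mem_nseq inE.
by case/orP=> [/andP[? /eqP->]|/IHs/andP[-> ->]]; rewrite ?eqxx ?orbT.
Qed.

Lemma pairwise_flatten_nseq (T : eqType) (r : rel T) (f : T -> nat) (s : seq T) :
  reflexive r -> pairwise r s -> pairwise r (flatten [seq nseq (f w) w | w <- s]).
Proof.
move=> r_refl; elim: s => [|w s IHs] //= /andP[rw rs].
rewrite pairwise_cat IHs // andbT; apply/andP; split.
  apply/allrelP => x y /nseqP[-> _] /flattenP[_ /mapP[w' w's ->] /nseqP[-> _]].
  exact: (allP rw).
by elim: (f w) => [|k IHk] //=; rewrite IHk all_nseq r_refl orbT.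
Qed.

(* [pairwise (fun x y => P y ==> P x) s] says that the elements satisfying [P]
   form a prefix of [s]. *)
Lemma count_predI_prefix (T : eqType) (P Q : pred T) (s : seq T) :
  pairwise (fun x y => P y ==> P x) s -> pairwise (fun x y => Q y ==> Q x) s ->
  count (predI P Q) s = minn (count P s) (count Q s).
Proof.
elim: s => [|x s IHs] // /andP[/allP Px Ps] /andP[/allP Qx Qs].
have block (R : pred T) : {in s, forall y, R y ==> R x} -> ~~ R x -> count R (x :: s) = 0.
  move=> Rx nRx; apply/eqP; rewrite -leqn0 leqNgt -has_count; apply/hasP => -[y].
  by rewrite inE => /predU1P[->|/Rx/implyP Ry]; [apply/negP | move/Ry; apply/negP].
have [Px0|nPx] := boolP (P x); last first.
  rewrite (block P) // min0n; apply/eqP; rewrite -leqn0 -(block P) //.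
  by apply: sub_count => y /andP[].
have [Qx0|nQx] := boolP (Q x); last first.
  rewrite (block Q) // minn0; apply/eqP; rewrite -leqn0 -(block Q) //.
  by apply: sub_count => y /andP[].
by rewrite /= Px0 Qx0 IHs // minnSS.
Qed.

Lemma count_pair_extremal (S T : eqType) (r1 : rel S) (r2 : rel T)
    (s : seq (S * T)) x y :
  pairwise (fun e e' => r1 e.1 e'.1 && r2 e.2 e'.2) s ->
  {in s, forall e, r1 e.1 x -> e.1 = x} -> {in s, forall e, r2 e.2 y -> e.2 = y} ->
  count_mem (x, y) s = minn (count (fun e => e.1 == x) s) (count (fun e => e.2 == y) s).
Proof.
move=> s_mono x_min y_min.
transitivity (count (predI (fun e : S * T => e.1 == x) (fun e => e.2 == y)) s).
  by apply: eq_count => -[a b]; rewrite /= xpair_eqE.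
apply: count_predI_prefix.
- apply: (sub_in_pairwise _ (allss s) s_mono) => e e' es _ /andP[le1 _].
  by apply/implyP => /eqP e'x; rewrite (x_min e es) // -e'x.
- apply: (sub_in_pairwise _ (allss s) s_mono) => e e' es _ /andP[_ le2].
  by apply/implyP => /eqP e'y; rewrite (y_min e es) // -e'y.
Qed.

(** * Crossing chords *)

Definition interleave (u v s t : nat) : bool :=
  (minn u v < minn s t < maxn u v) && (maxn u v < maxn s t)
  || (minn s t < minn u v < maxn s t) && (maxn s t < maxn u v).

Lemma interleaveC u v s t : interleave u v s t = interleave s t u v.
Proof. by rewrite /interleave orbC. Qed.

Lemma interleave_swap u v s t : interleave v u s t = interleave u v s t.
Proof. by rewrite /interleave minnC maxnC. Qed.

Lemma interleave_swapr u v s t : interleave u v t s = interleave u v s t.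
Proof. by rewrite interleaveC interleave_swap interleaveC. Qed.

Lemma minn_subl c a b : minn (c - a) (c - b) = c - maxn a b.
Proof.
case: (leqP a b) => [ab|/ltnW ba].
  exact/minn_idPr/leq_sub2l.
exact/minn_idPl/leq_sub2l.
Qed.

Lemma maxn_subl c a b : maxn (c - a) (c - b) = c - minn a b.
Proof.
case: (leqP a b) => [ab|/ltnW ba].
  exact/maxn_idPl/leq_sub2l.
exact/maxn_idPr/leq_sub2l.
Qed.

Lemma interleave_subn c u v s t : u <= c -> v <= c -> s <= c -> t <= c ->
  interleave (c - u) (c - v) (c - s) (c - t) = interleave u v s t.
Proof.
move=> uc vc sc tc.
have minc a b : a <= c -> minn a b <= c by move=> ac; rewrite geq_min ac.
have maxc a b : a <= c -> b <= c -> maxn a b <= c by move=> ac bc; rewrite geq_max ac.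
rewrite /interleave !minn_subl !maxn_subl !ltn_sub2lE ?minc ?maxc //.
by rewrite orbC; congr orb; apply/idP/idP => /andP[/andP[-> ->] ->].
Qed.

Lemma interleave_outside u v s t : (t < minn u v) || (maxn u v < t) ->
  interleave u v s t = (minn u v < s < maxn u v).
Proof. by rewrite /interleave => tout; apply/idP/idP; lia. Qed.

Definition arcs_sym n (d : diagram n) : Prop := forall a b, arcs d a b = arcs d b a.

Definition noncrossing n (d : diagram n) : Prop :=
  forall u v s t : 'I_n.+1, 0 < arcs d u v -> 0 < arcs d s t -> ~~ interleave u v s t.

Lemma arc_diagram_noncrossing n (l : 'I_n -> nat) linf (d : diagram n) :
  is_arc_diagram l linf d -> arcs_sym d /\ noncrossing d.
Proof.
case=> _ d_sym _ d_nest _; split=> // u v s t.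
have ordered (a b c e : 'I_n.+1) : a < b -> c < e -> 0 < arcs d a b -> 0 < arcs d c e ->
    ~~ interleave a b c e.
  move=> ab ce ab0 ce0; apply/negP; rewrite /interleave => abce.
  have [acbe|caeb] : [&& a < c, c < b & b < e] \/ [&& c < a, a < e & e < b] by lia.
  - by case: (d_nest a c b e); lia.
  - by case: (d_nest c a e b); lia.
move=> uv0 st0.
have [uv|vu|<-] := ltngtP u v; last by rewrite /interleave; lia.
all: have [st|ts|<-] := ltngtP s t; last by rewrite interleaveC /interleave; lia.
- exact: ordered.
- by rewrite -interleave_swapr ordered // d_sym.
- by rewrite -interleave_swap ordered // d_sym.
- by rewrite -interleave_swap -interleave_swapr ordered // d_sym.
Qed.

(** * Border thickness *)

Definition side_arcs n (d : diagram n) (k : nat) : nat :=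
  arcs d (inord k) (inord (k.+1 %% n.+1)).

Lemma modS_small n k : k <= n -> k.+1 %% n.+1 = if k < n then k.+1 else 0.
Proof.
move=> kn; case: ltnP => kn'; first by rewrite modn_small.
by rewrite (_ : k = n) ?modnn //; lia.
Qed.

Lemma leq_border_thickness n (d : diagram n) m :
  m <= border_thickness d <-> (forall k, k <= n -> m <= side_arcs d k).
Proof.
rewrite /border_thickness leq_foldr_minn all_map; split.
  by case/andP=> _ /allP m_le k kn; apply: m_le; rewrite mem_iota add0n ltnS kn.
move=> m_le; apply/andP; split.
  have := m_le n (leqnn n); rewrite /side_arcs modnn.
  by rewrite -[ord_max]inord_val -[ord0]inord_val.
by apply/allP => k; rewrite mem_iota add0n ltnS => /andP[_ kn]; apply: m_le.
Qed.

Lemma border_thickness_le_of_sides n (d d' : diagram n) (c1 c2 : nat) :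
  c1 <= n -> c2 <= n ->
  minn (side_arcs d c1) (side_arcs d c2) <= minn (side_arcs d' c1) (side_arcs d' c2) ->
  (forall k, k <= n -> k != c1 -> k != c2 ->
     exists2 k', k' <= n & side_arcs d' k = side_arcs d k') ->
  border_thickness d <= border_thickness d'.
Proof.
move=> c1n c2n corners sides; apply/leq_border_thickness => k kn.
have bt_le := (leq_border_thickness d (border_thickness d)).1 (leqnn _).
have bt_corners : border_thickness d <= minn (side_arcs d' c1) (side_arcs d' c2).
  by apply: leq_trans corners; rewrite leq_min !bt_le.
have [->|kc1] := eqVneq k c1; first exact: leq_trans bt_corners (geq_minl _ _).
have [->|kc2] := eqVneq k c2; first exact: leq_trans bt_corners (geq_minr _ _).
by have [k' k'n ->] := sides k kn kc1 kc2; apply: bt_le.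
Qed.

(** * Cutting along a chord *)

Section Chord.
Variables (n p q : nat).
Hypotheses (p_gt0 : 0 < p) (p_le_q : p <= q) (q_le_n : q <= n).

Implicit Types (x y o : 'I_n.+1) (d : diagram n).

Lemma inside_inord k : k <= n -> inside p q (inord k : 'I_n.+1) = (p <= k <= q).
Proof. by move=> kn; rewrite /inside inordK. Qed.

Lemma refl_inside x : inside p q x -> refl p q x = p + q - x :> nat.
Proof. by move=> xin; rewrite /refl xin inordK //; move: xin; rewrite /inside; lia. Qed.

Lemma inside_refl x : inside p q (refl p q x) = inside p q x.
Proof.
case xin: (inside p q x); last by rewrite /refl xin.
by rewrite {1}/inside refl_inside //; move: xin; rewrite /inside; lia.
Qed.

Lemma reflK : involutive (@refl n p q).
Proof.
move=> x; case xin: (inside p q x); last by rewrite /refl xin xin.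
apply: val_inj => /=; rewrite refl_inside ?inside_refl // refl_inside //.
by move: xin; rewrite /inside; lia.
Qed.

Lemma refl_inord k : p <= k <= q -> refl p q (inord k : 'I_n.+1) = inord (p + q - k).
Proof.
by move=> kpq; apply: val_inj => /=; rewrite refl_inside ?inside_inord ?inordK //; lia.
Qed.

Lemma mem_ins x : (x \in ins n p q) = inside p q x.
Proof.
apply/mapP/idP => [[k] | xin].
  by rewrite mem_iota => kpq ->; rewrite inside_inord; lia.
by exists (val x); rewrite ?inord_val // mem_iota /=; move: xin; rewrite /inside; lia.
Qed.

Lemma mem_outs x : (x \in outs n p q) = ~~ inside p q x.
Proof.
apply/mapP/idP => [[k] | xout].
  by rewrite mem_cat !mem_rev !mem_iota => kout ->; rewrite inside_inord; lia.
exists (val x); rewrite ?inord_val // mem_cat !mem_rev !mem_iota /=.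
by move: xout (ltn_ord x); rewrite /inside; lia.
Qed.

(* Rank of an outside position in the order p-1, p-2, ..., 0, n, n-1, ..., q+1
   in which the boundary is met when leaving the chord at its p-1|p end. *)
Definition out_rank o : nat := if o < p then p.-1 - o else p + n - o.

Lemma out_rank_inord k : k <= n ->
  out_rank (inord k) = if k < p then p.-1 - k else p + n - k.
Proof. by move=> kn; rewrite /out_rank inordK. Qed.

Lemma ins_sorted : pairwise (fun x y => x < y) (ins n p q).
Proof.
rewrite /ins pairwise_map; apply: pairwise_iota => a b.
by rewrite !mem_iota /= => ? ? ?; rewrite !inordK; lia.
Qed.

Lemma outs_sorted : pairwise (fun x y => out_rank x < out_rank y) (outs n p q).
Proof.
rewrite /outs pairwise_map pairwise_cat !pairwise_rev; apply/and3P; split.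
- apply/allrelP => a b; rewrite !mem_rev !mem_iota /= => ? ?.
  by rewrite !out_rank_inord; (repeat case: ifP => ?); lia.
- apply: pairwise_iota => a b; rewrite !mem_iota /= => ? ? ?.
  by rewrite !out_rank_inord; (repeat case: ifP => ?); lia.
- apply: pairwise_iota => a b; rewrite !mem_iota /= => ? ? ?.
  by rewrite !out_rank_inord; (repeat case: ifP => ?); lia.
Qed.

Definition chord_lex (e e' : 'I_n.+1 * 'I_n.+1) : bool :=
  (e.1 < e'.1) || (e.1 == e'.1) && (out_rank e.2 <= out_rank e'.2).

Definition chord_le (e e' : 'I_n.+1 * 'I_n.+1) : bool :=
  (e.1 <= e'.1) && (out_rank e.2 <= out_rank e'.2).

Lemma chord_le_refl : reflexive chord_le.
Proof. by move=> e; rewrite /chord_le !leqnn. Qed.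

Lemma mem_cross d e : e \in cross p q d ->
  [/\ inside p q e.1, ~~ inside p q e.2 & 0 < arcs d e.1 e.2].
Proof.
rewrite /cross => /(mem_flatten_nseq (f := fun io => arcs d io.1 io.2)).
by case/andP=> /allpairsP[[i o] [/= iin oout ->]] arcs_pos; rewrite -mem_ins -mem_outs.
Qed.

Lemma count_cross d i o : inside p q i -> ~~ inside p q o ->
  count_mem (i, o) (cross p q d) = arcs d i o.
Proof.
move=> iin oout; rewrite /cross (count_flatten_nseq (fun io => arcs d io.1 io.2)).
rewrite count_uniq_mem; last first.
  apply: (pairwise_uniq _ (pairwise_allpairs_lex ins_sorted outs_sorted)).
  by move=> e /=; rewrite !ltnn andbF.
rewrite (_ : (i, o) \in _) ?muln1 //; apply/allpairsP; exists (i, o).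
by rewrite mem_ins mem_outs.
Qed.

Lemma cross_lex d : pairwise chord_lex (cross p q d).
Proof.
apply: pairwise_flatten_nseq => [e|]; first by rewrite /chord_lex eqxx leqnn orbT.
apply: sub_pairwise (pairwise_allpairs_lex ins_sorted outs_sorted) => e e' /=.
by rewrite /chord_lex => /orP[->//|/andP[-> /ltnW ->]]; rewrite orbT.
Qed.

Lemma interleave_chord x o y o' : inside p q x -> ~~ inside p q o ->
  inside p q y -> ~~ inside p q o' ->
  interleave x o y o' = (x < y) && (out_rank o' < out_rank o)
                        || (y < x) && (out_rank o < out_rank o').
Proof.
move: (ltn_ord o) (ltn_ord o'); rewrite /inside /interleave /out_rank => ? ? ? ? ? ?.
by apply/idP/idP; (repeat case: ifP => ?); lia.
Qed.

Lemma cross_sorted d : noncrossing d -> pairwise chord_le (cross p q d).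
Proof.
move=> d_nc; apply: (sub_in_pairwise _ (allss _) (cross_lex d)).
move=> e e' /mem_cross[ein eout e0] /mem_cross[e'in e'out e'0].
rewrite /chord_lex /chord_le => /orP[lt|/andP[/eqP-> ->]]; last by rewrite leqnn.
rewrite (ltnW lt) leqNgt; apply/negP => gt.
by move: (d_nc _ _ _ _ e0 e'0); rewrite interleave_chord // lt gt.
Qed.

Lemma unzip1_newcross d :
  unzip1 (newcross p q d) = map (refl p q) (rev (unzip1 (cross p q d))).
Proof. by rewrite unzip1_zip // size_map size_rev !size_map. Qed.

Lemma unzip2_newcross d : unzip2 (newcross p q d) = unzip2 (cross p q d).
Proof. by rewrite unzip2_zip // size_map size_rev !size_map. Qed.

Lemma mem_newcross d e : e \in newcross p q d ->
  [/\ inside p q e.1, ~~ inside p q e.2,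
       exists o, (refl p q e.1, o) \in cross p q d
     & exists i, (i, e.2) \in cross p q d].
Proof.
move=> ein; have := map_f fst ein; have := map_f snd ein.
rewrite -[map snd _]/(unzip2 _) -[map fst _]/(unzip1 _) unzip2_newcross unzip1_newcross.
case/mapP=> [[i o2] io2 /= ->] /mapP[_ /[!mem_rev] /mapP[[i1 o] i1o -> ->]].
have [i1in _ _] := mem_cross i1o; have [_ o2out _] := mem_cross io2.
by split; [rewrite inside_refl | | exists o; rewrite reflK | exists i].
Qed.

Lemma newcross_sorted d : noncrossing d -> pairwise chord_le (newcross p q d).
Proof.
move=> d_nc; apply: (pairwise_zip (r1 := fun x y : 'I_n.+1 => x <= y)
                                   (r2 := fun o o' => out_rank o <= out_rank o')).
- rewrite pairwise_map pairwise_rev pairwise_map.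
  apply: (sub_in_pairwise _ (allss _) (cross_sorted d_nc)).
  move=> e e' /mem_cross[ein _ _] /mem_cross[e'in _ _] /andP[le _] /=.
  by rewrite !refl_inside //; lia.
- by rewrite pairwise_map; apply: sub_pairwise (cross_sorted d_nc) => e e' /andP[].
Qed.

Local Notation pL := (inord p : 'I_n.+1).
Local Notation oL := (inord p.-1 : 'I_n.+1).
Local Notation pR := (inord q : 'I_n.+1).
Local Notation oR := (inord (q.+1 %% n.+1) : 'I_n.+1).

Lemma inside_corners :
  [/\ inside p q pL, ~~ inside p q oL, inside p q pR & ~~ inside p q oR].
Proof.
by rewrite !inside_inord ?(modS_small q_le_n); try split; (repeat case: ifP => ?); lia.
Qed.

Lemma refl_pL : refl p q pL = pR.
Proof. by rewrite refl_inord ?addKn // leqnn. Qed.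

Lemma inside_min x : inside p q x -> x <= pL -> x = pL.
Proof. by move=> xin xp; apply: val_inj; move: xin xp; rewrite /inside /= inordK; lia. Qed.

Lemma inside_max x : inside p q x -> pR <= x -> x = pR.
Proof. by move=> xin xq; apply: val_inj; move: xin xq; rewrite /inside /= inordK; lia. Qed.

Lemma outside_rank_min o : ~~ inside p q o -> out_rank o <= out_rank oL -> o = oL.
Proof.
move=> oout; apply: contraTeq => ne; rewrite -ltnNge out_rank_inord; last lia.
move: oout ne (ltn_ord o); rewrite /inside /out_rank -val_eqE /= inordK; last lia.
by (repeat case: ifP => ?); lia.
Qed.

Lemma outside_rank_max o : ~~ inside p q o -> out_rank oR <= out_rank o -> o = oR.
Proof.
have oR_n : (if q < n then q.+1 else 0) <= n by case: ifP; lia.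
move=> oout; apply: contraTeq => ne.
rewrite -ltnNge out_rank_inord (modS_small q_le_n) //.
move: oout ne (ltn_ord o).
rewrite /inside /out_rank -val_eqE /= inordK (modS_small q_le_n) //.
by (repeat case: ifP => ?); lia.
Qed.

Definition chord_pair (e : 'I_n.+1 * 'I_n.+1) : bool :=
  inside p q e.1 && ~~ inside p q e.2.

Lemma count_left_corner s : pairwise chord_le s -> {in s, forall e, chord_pair e} ->
  count_mem (pL, oL) s
  = minn (count (fun e => e.1 == pL) s) (count (fun e => e.2 == oL) s).
Proof.
move=> s_sorted s_chord.
apply: (count_pair_extremal (r1 := fun x y : 'I_n.+1 => x <= y)
          (r2 := fun o o' => out_rank o <= out_rank o')) s_sorted _ _.
- by move=> e /s_chord/andP[ein _]; apply: inside_min.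
- by move=> e /s_chord/andP[_ eout]; apply: outside_rank_min.
Qed.

Lemma count_right_corner s : pairwise chord_le s -> {in s, forall e, chord_pair e} ->
  count_mem (pR, oR) s
  = minn (count (fun e => e.1 == pR) s) (count (fun e => e.2 == oR) s).
Proof.
move=> s_sorted s_chord; rewrite -!(count_rev _ s).
apply: (count_pair_extremal (r1 := fun x y : 'I_n.+1 => y <= x)
          (r2 := fun o o' => out_rank o' <= out_rank o)); first by rewrite pairwise_rev.
- by move=> e /[!mem_rev] /s_chord/andP[ein _]; apply: inside_max.
- by move=> e /[!mem_rev] /s_chord/andP[_ eout]; apply: outside_rank_max.
Qed.

Lemma cross_chord_pair d : {in cross p q d, forall e, chord_pair e}.
Proof. by move=> e /mem_cross[ein eout _]; apply/andP. Qed.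

Lemma newcross_chord_pair d : {in newcross p q d, forall e, chord_pair e}.
Proof. by move=> e /mem_newcross[ein eout _ _]; apply/andP. Qed.

Lemma count_fst_newcross d x :
  count (fun e => e.1 == x) (newcross p q d)
  = count (fun e => e.1 == refl p q x) (cross p q d).
Proof.
rewrite -!(count_map fst (pred1 _)) -![map fst _]/(unzip1 _) unzip1_newcross.
rewrite count_map count_rev.
by apply: eq_count => y /=; rewrite -{1}(reflK x) (inj_eq (can_inj reflK)).
Qed.

Lemma count_snd_newcross d o :
  count (fun e => e.2 == o) (newcross p q d) = count (fun e => e.2 == o) (cross p q d).
Proof. by rewrite -!(count_map snd (pred1 _)) -![map snd _]/(unzip2 _) unzip2_newcross. Qed.

Lemma act_arcs_in d a b : inside p q a -> inside p q b ->
  arcs (act_s p q d) a b = arcs d (refl p q a) (refl p q b).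
Proof. by move=> ain bin; rewrite /act_s /= ain bin. Qed.

Lemma act_arcs_out d a b : ~~ inside p q a -> ~~ inside p q b ->
  arcs (act_s p q d) a b = arcs d a b.
Proof. by move=> aout bout; rewrite /act_s /= (negbTE aout) (negbTE bout). Qed.

Lemma act_arcs_in_out d a b : inside p q a -> ~~ inside p q b ->
  arcs (act_s p q d) a b = count_mem (a, b) (newcross p q d).
Proof. by move=> ain bout; rewrite /act_s /= ain (negbTE bout). Qed.

Lemma act_arcs_out_in d a b : ~~ inside p q a -> inside p q b ->
  arcs (act_s p q d) a b = count_mem (b, a) (newcross p q d).
Proof. by move=> aout bin; rewrite /act_s /= bin (negbTE aout). Qed.

Lemma side_arcs_act_out d k : k <= n -> (k.+1 < p) || (q < k) ->
  side_arcs (act_s p q d) k = side_arcs d k.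
Proof.
move=> kn kout; rewrite /side_arcs modS_small // act_arcs_out // inside_inord //;
  by (repeat case: ifP => ?); lia.
Qed.

Lemma side_arcs_act_in d k : arcs_sym d -> p <= k < q ->
  side_arcs (act_s p q d) k = side_arcs d (p + q - k.+1).
Proof.
move=> d_sym kin; rewrite /side_arcs !modn_small; [| lia | lia].
rewrite (_ : (p + q - k.+1).+1 = p + q - k); last by lia.
have [kin' k1in] : inside p q (inord k : 'I_n.+1) /\ inside p q (inord k.+1 : 'I_n.+1).
  by rewrite !inside_inord; [split | lia | lia]; lia.
by rewrite act_arcs_in // !refl_inord 1?d_sym; [ | lia | lia].
Qed.

Lemma side_arcs_act_left d :
  side_arcs (act_s p q d) p.-1 = count_mem (pL, oL) (newcross p q d).
Proof.
have [pLin oLout _ _] := inside_corners.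
by rewrite /side_arcs prednK // modn_small ?act_arcs_out_in //; lia.
Qed.

Lemma side_arcs_act_right d :
  side_arcs (act_s p q d) q = count_mem (pR, oR) (newcross p q d).
Proof. by have [_ _ pRin oRout] := inside_corners; rewrite /side_arcs act_arcs_in_out. Qed.

Lemma side_arcs_left d : arcs_sym d ->
  side_arcs d p.-1 = count_mem (pL, oL) (cross p q d).
Proof.
have [pLin oLout _ _] := inside_corners.
by move=> d_sym; rewrite /side_arcs prednK // modn_small ?count_cross 1?d_sym //; lia.
Qed.

Lemma side_arcs_right d : side_arcs d q = count_mem (pR, oR) (cross p q d).
Proof. by have [_ _ pRin oRout] := inside_corners; rewrite /side_arcs count_cross. Qed.

(* With a = #(crossings ending at p-1), b = #(starting at p), c = #(starting at q),
   e = #(ending at q+1), the old corner sides carry min(b,a) and min(c,e) arcs and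
   the new ones min(c,a) and min(b,e). *)
Lemma corner_sides_act d : arcs_sym d -> noncrossing d ->
  minn (side_arcs (act_s p q d) p.-1) (side_arcs (act_s p q d) q)
  = minn (side_arcs d p.-1) (side_arcs d q).
Proof.
move=> d_sym d_nc.
rewrite side_arcs_act_left side_arcs_act_right side_arcs_left // side_arcs_right.
have [cross_s newcross_s] := (cross_sorted d_nc, newcross_sorted d_nc).
rewrite !count_left_corner ?count_right_corner //;
  try solve [exact: cross_chord_pair | exact: newcross_chord_pair].
rewrite !count_fst_newcross !count_snd_newcross refl_pL -[pL in refl _ _ pL]refl_pL reflK.
lia.
Qed.

Lemma border_thickness_act d : arcs_sym d -> noncrossing d ->
  border_thickness (act_s p q d) = border_thickness d.
Proof.
move=> d_sym d_nc; have corners := corner_sides_act d_sym d_nc.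
have [pL_n q_n] : p.-1 <= n /\ q <= n by split; lia.
apply/eqP; rewrite eqn_leq; apply/andP; split;
  apply: (border_thickness_le_of_sides pL_n q_n); rewrite ?corners // => k kn kL kR.
all: have [kout|/norP[kp kq]] := boolP ((k.+1 < p) || (q < k));
  first by exists k; rewrite ?side_arcs_act_out.
all: have kpq : p <= k < q by move: kL kR => /eqP ? /eqP ?; lia.
all: exists (p + q - k.+1); first lia.
- rewrite side_arcs_act_in //; last lia.
  by rewrite (_ : p + q - (p + q - k.+1).+1 = k) //; lia.
- by rewrite side_arcs_act_in.
Qed.

(** * The action keeps arcs non-crossing *)

Lemma arcs_sym_act d : arcs_sym d -> arcs_sym (act_s p q d).
Proof.
move=> d_sym a b; rewrite /act_s /=.
by case: (inside p q a); case: (inside p q b) => //=; apply: d_sym.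
Qed.

Lemma inside_le_sum x : inside p q x -> x <= p + q.
Proof. by rewrite /inside => /andP[_ xq]; rewrite (leq_trans xq) ?leq_addl. Qed.

Lemma outside_range (x y t : 'I_n.+1) : inside p q x -> inside p q y -> ~~ inside p q t ->
  (t < minn x y) || (maxn x y < t).
Proof. by rewrite /inside; lia. Qed.

Lemma interleave_refl (u v s t : 'I_n.+1) :
  inside p q u -> inside p q v -> inside p q s -> inside p q t ->
  interleave (refl p q u) (refl p q v) (refl p q s) (refl p q t) = interleave u v s t.
Proof.
by move=> uin vin sin tin; rewrite !refl_inside // interleave_subn ?inside_le_sum.
Qed.

Lemma interleave_in_out (u v s t : 'I_n.+1) :
  inside p q u -> inside p q v -> ~~ inside p q s -> ~~ inside p q t ->
  ~~ interleave u v s t.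
Proof.
move=> uin vin sout tout; rewrite interleave_outside ?outside_range //.
by move: uin vin sout; rewrite /inside; lia.
Qed.

Lemma interleave_in_chord (u v s t o : 'I_n.+1) :
  inside p q u -> inside p q v -> inside p q s -> ~~ inside p q t -> ~~ inside p q o ->
  interleave u v s t -> interleave (refl p q u) (refl p q v) (refl p q s) o.
Proof.
move=> uin vin sin tout oout.
rewrite !interleave_outside ?outside_range ?inside_refl // !refl_inside //.
have uv_le : maxn u v <= p + q by rewrite geq_max !inside_le_sum.
by rewrite minn_subl maxn_subl !ltn_sub2lE ?inside_le_sum // andbC.
Qed.

Lemma interleave_out_chord (u v s t i : 'I_n.+1) :
  ~~ inside p q u -> ~~ inside p q v -> inside p q s -> ~~ inside p q t -> inside p q i ->
  interleave u v s t -> interleave u v i t.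
Proof. by rewrite /inside /interleave; lia. Qed.

(* An arc of the image diagram, oriented so that, if only one endpoint lies in
   the reflected region, that endpoint comes first. *)
Definition new_arc d (e : 'I_n.+1 * 'I_n.+1) : Prop :=
  [\/ [/\ inside p q e.1, inside p q e.2 & 0 < arcs d (refl p q e.1) (refl p q e.2)],
      [/\ ~~ inside p q e.1, ~~ inside p q e.2 & 0 < arcs d e.1 e.2]
    | e \in newcross p q d].

Lemma act_arcs_gt0 d (u v : 'I_n.+1) :
  0 < arcs (act_s p q d) u v -> new_arc d (u, v) \/ new_arc d (v, u).
Proof.
case uin: (inside p q u); case vin: (inside p q v).
- by rewrite act_arcs_in // => ?; left; apply: Or31.
- rewrite act_arcs_in_out ?(negbT vin) // -has_count has_pred1 => ?.
  by left; apply: Or33.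
- rewrite act_arcs_out_in ?(negbT uin) // -has_count has_pred1 => ?.
  by right; apply: Or33.
- rewrite act_arcs_out ?(negbT uin) ?(negbT vin) // => ?.
  by left; apply: Or32; rewrite uin vin.
Qed.

Lemma new_arcs_noninterleave d e e' : noncrossing d ->
  new_arc d e -> new_arc d e' -> ~~ interleave e.1 e.2 e'.1 e'.2.
Proof.
move=> d_nc.
have chord_chord (x o y o' : 'I_n.+1) : (x, o) \in newcross p q d ->
    (y, o') \in newcross p q d -> ~~ interleave x o y o'.
  move=> xo yo'; have [xin oout _ _] := mem_newcross xo.
  have [yin o'out _ _] := mem_newcross yo'.
  have := pairwise_comparable chord_le_refl (newcross_sorted d_nc) xo yo'.
  by rewrite interleave_chord // /chord_le /=; lia.
have in_chord (u v x o : 'I_n.+1) : inside p q u -> inside p q v ->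
    0 < arcs d (refl p q u) (refl p q v) -> (x, o) \in newcross p q d ->
    ~~ interleave u v x o.
  move=> uin vin uv0 /mem_newcross[xin oout [o' /mem_cross[_ o'out xo'0]] _].
  by apply: contra (d_nc _ _ _ _ uv0 xo'0); apply: interleave_in_chord.
have out_chord (u v x o : 'I_n.+1) : ~~ inside p q u -> ~~ inside p q v ->
    0 < arcs d u v -> (x, o) \in newcross p q d -> ~~ interleave u v x o.
  move=> uout vout uv0 /mem_newcross[xin oout _ [i /mem_cross[iin _ io0]]].
  by apply: contra (d_nc _ _ _ _ uv0 io0); apply: interleave_out_chord.
case: e e' => [u v] [s t] /=.
case=> [[uin vin uv0]|[uout vout uv0]|uv];
  case=> [[sin tin st0]|[sout tout st0]|st].
- by rewrite -interleave_refl //; apply: d_nc.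
- exact: interleave_in_out.
- exact: in_chord.
- by rewrite interleaveC interleave_in_out.
- exact: d_nc.
- exact: out_chord.
- by rewrite interleaveC in_chord.
- by rewrite interleaveC out_chord.
- exact: chord_chord.
Qed.

Lemma noncrossing_act d : noncrossing d -> noncrossing (act_s p q d).
Proof.
move=> d_nc u v s t /act_arcs_gt0 uv /act_arcs_gt0 st.
have ni := new_arcs_noninterleave d_nc.
case: uv st => [uv|vu] [st|ts].
- exact: ni uv st.
- by rewrite -interleave_swapr; apply: ni uv ts.
- by rewrite -interleave_swap; apply: ni vu st.
- by rewrite -interleave_swap -interleave_swapr; apply: ni vu ts.
Qed.
End Chord.

Lemma act_word_sym_noncrossing n (x : diagram n) w :
  arcs_sym x -> noncrossing x -> all (gen_ok n) w ->
  arcs_sym (act_word w x) /\ noncrossing (act_word w x).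
Proof.
move=> x_sym x_nc; elim: w => [|[p q] w IHw] //=.
case/andP=> /andP[/andP[p_gt0 /ltnW p_le_q] q_le_n] /IHw[wx_sym wx_nc].
by split; [apply: arcs_sym_act | apply: noncrossing_act].
Qed.

Theorem mainTheorem4 (n : nat) (l : 'I_n -> nat) (linf : nat) (x : diagram n)
    (w : seq (nat * nat)) :
  is_arc_diagram l linf x -> all (gen_ok n) w ->
  border_thickness (act_word w x) = border_thickness x.
Proof.
move=> /arc_diagram_noncrossing[x_sym x_nc].
elim: w => [|[p q] w IHw] // /andP[/andP[/andP[p_gt0 /ltnW p_le_q] q_le_n] w_ok].
have [wx_sym wx_nc] := act_word_sym_noncrossing x_sym x_nc w_ok.
by rewrite -(IHw w_ok) -(border_thickness_act p_gt0 p_le_q q_le_n wx_sym wx_nc).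
Qed.
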